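(* Let $(N,v)$ be a balanced game. Every coalition that is minimal with respect to inclusion in $\mathscr{E}(N,v)$ is strictly vital-exact.
   Context: A game $(N,v)$: $N$ finite nonempty, $v:2^N\to\mathbb{R}$, $v(\varnothing)=0$; $x(S)=\sum_{i\in S}x_i$. Core: $C(N,v)=\{x\in\mathbb{R}^N\mid x(N)=v(N),\ x(S)\ge v(S)\ \forall S\subseteq N\}$; the game is balanced if $C(N,v)\ne\varnothing$. A coalition (nonempty $S\subseteq N$) is effective if $x(S)=v(S)$ for all $x\in C(N,v)$; $\mathscr{E}(N,v)$ is the set of effective coalitions. A coalition $S$ is strictly vital-exact if there exists $x\in C(N,v)$ with $x(S)=v(S)$ and $x(T)>v(T)$ for all $T\in 2^S\setminus\{\varnothing,S\}$. *)

From mathcomp Require Import all_boot all_order all_algebra.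
Set Implicit Arguments. Unset Strict Implicit. Unset Printing Implicit Defensive.
Import Order.TTheory GRing.Theory Num.Theory.
Local Open Scope ring_scope.

Section Game.
Variables (R : realFieldType) (N : finType).

Definition xsum (x : N -> R) (S : {set N}) : R := \sum_(i in S) x i.

Definition in_core (v : {set N} -> R) (x : N -> R) : Prop :=
  xsum x [set: N] = v [set: N] /\ forall S : {set N}, v S <= xsum x S.

Definition balanced (v : {set N} -> R) : Prop := exists x, in_core v x.

Definition effective (v : {set N} -> R) (S : {set N}) : Prop :=
  S != set0 /\ forall x, in_core v x -> xsum x S = v S.

Definition minimal_effective (v : {set N} -> R) (S : {set N}) : Prop :=
  effective v S /\ forall T : {set N}, T \proper S -> ~ effective v T.

Definition strictly_vital_exact (v : {set N} -> R) (S : {set N}) : Prop :=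
  exists x, in_core v x /\ xsum x S = v S /\
    forall T : {set N}, T \subset S -> T != set0 -> T != S -> v T < xsum x T.

End Game.

From mathcomp Require Import all_boot all_order all_algebra.
From Stdlib Require Import Classical.
From mathcomp Require Import ring lra.
Import Order.TTheory GRing.Theory Num.Theory.
Local Open Scope ring_scope.

(* The core is convex, and the midpoint of two core points is strictly above
   v(T) as soon as one of them is.  A proper nonempty subcoalition T of a
   minimal effective S is not effective, so some core point is strict on T;
   averaging such points over the finitely many T gives one core point that is
   strict on all of them at once, while staying tight on the effective S. *)

Section CoreMidpoint.
Variables (R : realFieldType) (N : finType) (v : {set N} -> R).

Definition midpoint (x y : N -> R) : N -> R := fun i => (x i + y i) / 2.

Lemma xsum_midpoint x y T :
  xsum (midpoint x y) T = (xsum x T + xsum y T) / 2.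
Proof. by rewrite /xsum -big_split /= mulr_suml. Qed.

Lemma in_core_midpoint x y :
  in_core v x -> in_core v y -> in_core v (midpoint x y).
Proof.
move=> [x_eff x_ge] [y_eff y_ge]; split.
  by rewrite xsum_midpoint x_eff y_eff; field.
move=> T; rewrite xsum_midpoint ler_pdivlMr //.
by have := x_ge T; have := y_ge T; lra.
Qed.

Lemma xsum_midpoint_gt x y T :
  in_core v x -> in_core v y -> v T < xsum x T \/ v T < xsum y T ->
  v T < xsum (midpoint x y) T.
Proof.
move=> [_ x_ge] [_ y_ge] strict; rewrite xsum_midpoint ltr_pdivlMr //.
by have := x_ge T; have := y_ge T; case: strict; lra.
Qed.

Lemma not_effective_core_gt T :
  T != set0 -> ~ effective v T -> exists2 x, in_core v x & v T < xsum x T.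
Proof.
move=> T0 not_eff; apply: NNPP => no_strict; apply: not_eff; split=> // x x_core.
apply/eqP; rewrite eq_le; have [_ ->] := x_core; rewrite andbT leNgt.
by apply/negP => gt; apply: no_strict; exists x.
Qed.

Lemma core_gt_seq (s : seq {set N}) :
  balanced v -> (forall T, T \in s -> exists2 x, in_core v x & v T < xsum x T) ->
  exists2 x, in_core v x & forall T, T \in s -> v T < xsum x T.
Proof.
move=> [x0 x0_core]; elim: s => [|T s IH] strict_each; first by exists x0.
have [x x_core x_gt] : exists2 x, in_core v x & forall T', T' \in s -> v T' < xsum x T'.
  by apply: IH => T' T's; apply: strict_each; rewrite inE T's orbT.
have [y y_core y_gt] := strict_each T (mem_head _ _).
exists (midpoint x y); first exact: in_core_midpoint.
move=> T'; rewrite inE => /predU1P [-> | T's]; apply: xsum_midpoint_gt => //.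
- by right.
- by left; apply: x_gt.
Qed.

End CoreMidpoint.

Theorem mainTheorem8 (R : realFieldType) (N : finType) (v : {set N} -> R)
  (hN : (0 < #|N|)%N) (hv0 : v set0 = 0) (hbal : balanced v)
  (S : {set N}) (hS : minimal_effective v S) :
  strictly_vital_exact v S.
Proof.
have [[_ S_eff] S_min] := hS.
set subS := enum [set T : {set N} | (T \proper S) && (T != set0)].
have [x x_core x_gt] : exists2 x, in_core v x & forall T, T \in subS -> v T < xsum x T.
  apply: core_gt_seq => // T; rewrite mem_enum inE => /andP [TS T0].
  exact: not_effective_core_gt (S_min T TS).
exists x; split => //; split; first exact: S_eff.
move=> T TS T0 TneS; apply: x_gt.
by rewrite mem_enum inE properEneq TneS TS T0.
Qed.
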